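(* Let $\mathcal{H}$ be a complex separable Hilbert space and let $A$ be a bounded selfadjoint operator on $\mathcal{H}$. Then $A$ is an effect (i.e. $\mathbb{O}\le A\le I$) if and only if $$0\le \|A\|+\|I-A\|-1\le 1-\bigl|\,\|A\|-\|I-A\|\,\bigr|.$$
   Context: $\|\cdot\|$ denotes the operator norm, $I$ the identity and $\mathbb{O}$ the zero operator on $\mathcal{H}$; $A\le B$ means $\langle\varphi,A\varphi\rangle\le\langle\varphi,B\varphi\rangle$ for all $\varphi\in\mathcal{H}$. *)

(* scalars are the complex numbers R[i] over an abstract
   R : realType (mathcomp-real-closed's complex, ordered as a numClosedField). *)
From HB Require Import structures.
From mathcomp Require Import all_boot all_order all_algebra.
From mathcomp Require Import complex.
From mathcomp Require Import boolp classical_sets reals.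
Set Implicit Arguments. Unset Strict Implicit. Unset Printing Implicit Defensive.
Import Order.TTheory GRing.Theory Num.Theory.
Local Open Scope ring_scope.
Local Open Scope classical_set_scope.

Section Hilbert.
Variables (R : realType) (V : lmodType R[i]) (ip : V -> V -> R[i]).

Definition hnorm (x : V) : R := Num.sqrt (complex.Re (ip x x)).

(* inner product: conjugate-linear in the first, linear in the second argument *)
Definition is_inner_product : Prop :=
  [/\ (forall x (a : R[i]) y z, ip x (a *: y + z) = a * ip x y + ip x z),
      (forall x y, ip y x = (ip x y)^*),
      (forall x, 0 <= ip x x) &
      (forall x, ip x x = 0 -> x = 0)].

Definition hcauchy (u : nat -> V) : Prop :=
  forall e : R, 0 < e -> exists N, forall m n, (N <= m)%N -> (N <= n)%N ->
    hnorm (u m - u n) < e.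

Definition hconverges (u : nat -> V) (l : V) : Prop :=
  forall e : R, 0 < e -> exists N, forall n, (N <= n)%N -> hnorm (u n - l) < e.

Definition is_separable_hilbert : Prop :=
  [/\ is_inner_product,
      (forall u, hcauchy u -> exists l, hconverges u l) &
      (exists d : nat -> V, forall x (e : R), 0 < e -> exists n, hnorm (x - d n) < e)].

Definition bounded_op (A : V -> V) : Prop :=
  exists M : R, forall x, hnorm (A x) <= M * hnorm x.

Definition selfadjoint (A : V -> V) : Prop :=
  forall x y, ip (A x) y = ip x (A y).

Definition opnorm (A : V -> V) : R :=
  sup [set hnorm (A x) | x in [set x | hnorm x <= 1]].

Definition effect (A : V -> V) : Prop :=
  forall phi, 0 <= ip phi (A phi) /\ ip phi (A phi) <= ip phi phi.

End Hilbert.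

(* Write a := ||A|| and b := ||I - A||.  Since A is selfadjoint, A is an
   effect iff both A and I - A are positive contractions, and a positive
   operator below I has norm at most 1 (Cauchy-Schwarz for the form
   <x, A y>).  Conversely a, b <= 1 bound <x, A x> and <x, (I - A) x> by
   ||x||^2.  So A is an effect iff a <= 1 and b <= 1.  On the other hand
   1 <= a + b always holds, by the triangle inequality on a unit vector, and
   for such a and b the condition a, b <= 1 is exactly
   0 <= a + b - 1 <= 1 - |a - b|. *)
From Pilot Require Import Defs.
From HB Require Import structures.
From mathcomp Require Import all_boot all_order all_algebra.
From mathcomp Require Import complex.
From mathcomp Require Import boolp classical_sets reals.
From mathcomp Require Import ring lra.
Import Order.TTheory GRing.Theory Num.Theory.
Set Implicit Arguments. Unset Strict Implicit.
Local Open Scope complex_scope.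
(* Opened last, so that [z^*] is [Num.conj] as in Defs, not [conjc]. *)
Local Open Scope ring_scope.

Lemma le1_both_iff (R : realDomainType) (a b : R) : 1 <= a + b ->
  (a <= 1 /\ b <= 1) <-> (0 <= a + b - 1 /\ a + b - 1 <= 1 - `|a - b|).
Proof.
move=> ab_ge1.
by have [ab_ge0|ab_lt0] := lerP 0 (a - b);
  [rewrite ger0_norm | rewrite ltr0_norm]; lra.
Qed.

Lemma quadratic_ge0_sqr_le (R : realFieldType) (P Q c : R) :
  (forall t, 0 <= P - 2 * t * c + t ^+ 2 * Q) -> 0 <= Q -> c ^+ 2 <= P * Q.
Proof.
move=> quad_ge0 Q_ge0.
have P_ge0 : 0 <= P by move: (quad_ge0 0); rewrite /= !(mulr0, mul0r, expr0n, subr0, addr0).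
have [Q0|Q_neq0] := eqVneq Q 0.
  rewrite {}Q0 in quad_ge0 *.
  have [->|c_neq0] := eqVneq c 0; first by rewrite expr0n mulr0.
  have := quad_ge0 ((P + 1) / (2 * c)); rewrite mulr0 addr0.
  have -> : 2 * ((P + 1) / (2 * c)) * c = P + 1 by field; rewrite c_neq0.
  lra.
have Q_gt0 : 0 < Q by rewrite lt_def Q_neq0.
have := quad_ge0 (c / Q).
have -> : P - 2 * (c / Q) * c + (c / Q) ^+ 2 * Q = P - c ^+ 2 / Q.
  by field; rewrite Q_neq0.
by rewrite subr_ge0 ler_pdivrMr.
Qed.

Section ComplexParts.
Variable R : rcfType.

Lemma ReD (u v : R[i]) : complex.Re (u + v) = complex.Re u + complex.Re v.
Proof. exact: (raddfD (@complex.Re R : Rcomplex R -> R)). Qed.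

Lemma ReB (u v : R[i]) : complex.Re (u - v) = complex.Re u - complex.Re v.
Proof. exact: (raddfB (@complex.Re R : Rcomplex R -> R)). Qed.

Lemma ReMC (t : R) (u : R[i]) : complex.Re (t%:C * u) = t * complex.Re u.
Proof. by case: u => a b /=; rewrite mul0r subr0. Qed.

Lemma ReJ (z : R[i]) : complex.Re z^* = complex.Re z.
Proof. by apply: complexI; rewrite !complexRe Re_conj. Qed.

Lemma conjC_C (t : R) : t%:C^* = t%:C :> R[i].
Proof. by rewrite conj_Creal // complex_real. Qed.

Lemma Im_eq0_conj (z : R[i]) : z^* = z -> complex.Im z = 0.
Proof.
move=> zJ; have : z \is Num.real by rewrite CrealE zJ.
by case: z {zJ} => a b; rewrite complex_real => /eqP.
Qed.

End ComplexParts.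

Lemma hermitian_form_CS (R : rcfType) (V : lmodType R[i]) (f : V -> V -> R[i]) :
  (forall x a y z, f x (a *: y + z) = a * f x y + f x z) ->
  (forall x y, f y x = (f x y)^*) ->
  (forall x, 0 <= complex.Re (f x x)) ->
  forall x y, complex.Re (f x y) ^+ 2 <= complex.Re (f x x) * complex.Re (f y y).
Proof.
move=> f_lin f_herm f_pos x y; apply: quadratic_ge0_sqr_le (f_pos y) => t.
pose w := (- t)%:C *: y + x.
have fwy : complex.Re (f w y) = - t * complex.Re (f y y) + complex.Re (f x y).
  by rewrite f_herm f_lin ReJ ReD ReMC (f_herm x y) ReJ.
have fwx : complex.Re (f w x) = - t * complex.Re (f x y) + complex.Re (f x x).
  by rewrite f_herm f_lin ReJ ReD ReMC.
have := f_pos w; rewrite {2}/w f_lin ReD ReMC fwy fwx.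
nra.
Qed.

Section InnerProduct.
Variables (R : realType) (V : lmodType R[i]) (ip : V -> V -> R[i]).
Hypothesis ipP : is_inner_product ip.

Lemma ip_linr x a y z : ip x (a *: y + z) = a * ip x y + ip x z.
Proof. by case: ipP. Qed.

Lemma ip_conj x y : ip y x = (ip x y)^*.
Proof. by case: ipP. Qed.

Lemma ip0r x : ip x 0 = 0.
Proof.
have := ip_linr x 1 0 0; rewrite scale1r addr0 mul1r => ip0D.
by apply: (addIr (ip x 0)); rewrite -ip0D add0r.
Qed.

Lemma ipZr x a y : ip x (a *: y) = a * ip x y.
Proof. by have := ip_linr x a y 0; rewrite !addr0 ip0r addr0. Qed.

Lemma ipDr x y z : ip x (y + z) = ip x y + ip x z.
Proof. by have := ip_linr x 1 y z; rewrite scale1r mul1r. Qed.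

Lemma ipBr x y z : ip x (y - z) = ip x y - ip x z.
Proof. by rewrite ipDr -scaleN1r ipZr mulN1r. Qed.

Lemma ipDl x y z : ip (y + z) x = ip y x + ip z x.
Proof. by rewrite !(ip_conj x) ipDr rmorphD. Qed.

Lemma ipBl x y z : ip (y - z) x = ip y x - ip z x.
Proof. by rewrite !(ip_conj x) ipBr rmorphB. Qed.

Lemma ipZl x a y : ip (a *: y) x = a^* * ip y x.
Proof. by rewrite !(ip_conj x) ipZr rmorphM. Qed.

Lemma Re_ip_sym x y : complex.Re (ip y x) = complex.Re (ip x y).
Proof. by rewrite ip_conj ReJ. Qed.

Lemma Re_ip_ge0 x : 0 <= complex.Re (ip x x).
Proof. by case: ipP => _ _ /(_ x); rewrite lecE => /andP[]. Qed.

Lemma Im_ip0 x : complex.Im (ip x x) = 0.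
Proof. by case: ipP => _ _ /(_ x) /ger0_Im. Qed.

Lemma hnorm_ge0 x : 0 <= hnorm ip x.
Proof. exact: sqrtr_ge0. Qed.

Lemma hnorm_sqr x : hnorm ip x ^+ 2 = complex.Re (ip x x).
Proof. by rewrite sqr_sqrtr // Re_ip_ge0. Qed.

Lemma hnorm0 : hnorm ip 0 = 0.
Proof. by rewrite /hnorm ip0r sqrtr0. Qed.

Lemma hnorm_eq0 x : hnorm ip x = 0 -> x = 0.
Proof.
move=> x0; case: ipP => _ _ _; apply.
have Re0 : complex.Re (ip x x) = 0 by rewrite -hnorm_sqr x0 expr0n.
by move: Re0 (Im_ip0 x); case: (ip x x) => a b /= -> ->.
Qed.

Lemma hnormZ (t : R) x : hnorm ip (t%:C *: x) = `|t| * hnorm ip x.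
Proof.
rewrite /hnorm ipZl ipZr conjC_C !ReMC mulrA -expr2.
by rewrite sqrtrM ?sqr_ge0 // sqrtr_sqr.
Qed.

Lemma hnormN x : hnorm ip (- x) = hnorm ip x.
Proof. by rewrite -scaleN1r -(rmorphN1 (real_complex R)) hnormZ normrN1 mul1r. Qed.

Lemma exists_unit_vector : (exists x : V, x != 0) -> exists u, hnorm ip u = 1.
Proof.
case=> x x_neq0; exists ((hnorm ip x)^-1%:C *: x).
rewrite hnormZ ger0_norm ?invr_ge0 ?hnorm_ge0 // mulVf //.
by apply: contra_neq x_neq0; apply: hnorm_eq0.
Qed.

Lemma Re_ip_le x y : complex.Re (ip x y) <= hnorm ip x * hnorm ip y.
Proof.
have := hermitian_form_CS ip_linr ip_conj Re_ip_ge0 x y.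
rewrite -!hnorm_sqr -exprMn => CS.
have := mulr_ge0 (hnorm_ge0 x) (hnorm_ge0 y).
move: CS; set n := _ * _; set r := complex.Re _; nra.
Qed.

Lemma hnormD_le x y : hnorm ip (x + y) <= hnorm ip x + hnorm ip y.
Proof.
have sqr_le : hnorm ip (x + y) ^+ 2 <= (hnorm ip x + hnorm ip y) ^+ 2.
  rewrite hnorm_sqr ipDl !ipDr !ReD (Re_ip_sym x y) -!hnorm_sqr.
  have := Re_ip_le x y; nra.
by rewrite ler_pXn2r ?nnegrE ?addr_ge0 ?hnorm_ge0 in sqr_le.
Qed.

End InnerProduct.

Section Operators.
Variables (R : realType) (V : lmodType R[i]) (ip : V -> V -> R[i]).
Hypothesis ipP : is_inner_product ip.

Lemma opnorm_ub (B : V -> V) x : bounded_op ip B -> hnorm ip x <= 1 ->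
  hnorm ip (B x) <= opnorm ip B.
Proof.
case=> M BM x_le1; apply: ub_le_sup; last by exists x.
exists `|M| => _ [y /= y_le1 <-].
have := BM y; have := hnorm_ge0 ip y; have := ler_norm M; have := normr_ge0 M.
nra.
Qed.

Lemma opnorm_le (B : V -> V) k :
  (forall x, hnorm ip x <= 1 -> hnorm ip (B x) <= k) -> opnorm ip B <= k.
Proof.
move=> Bk; apply: ge_sup; first by exists (hnorm ip (B 0)), 0; rewrite //= (hnorm0 ipP).
by move=> _ [x /= /Bk Bx_le <-].
Qed.

Lemma hnorm_le_opnorm (B : {linear V -> V}) x : bounded_op ip B ->
  hnorm ip (B x) <= opnorm ip B * hnorm ip x.
Proof.
move=> Bb; have [x0|x_neq0] := eqVneq (hnorm ip x) 0.
  by rewrite (hnorm_eq0 ipP x0) linear0 !(hnorm0 ipP) mulr0.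
have x_gt0 : 0 < hnorm ip x by rewrite lt_def x_neq0 hnorm_ge0.
pose u := (hnorm ip x)^-1%:C *: x.
have u_le1 : hnorm ip u <= 1.
  by rewrite hnormZ // ger0_norm ?invr_ge0 ?hnorm_ge0 // mulVf.
have := opnorm_ub Bb u_le1.
by rewrite linearZ hnormZ // ger0_norm ?invr_ge0 ?hnorm_ge0 // ler_pdivrMl // mulrC.
Qed.

Lemma bounded_op_compl (B : {linear V -> V}) :
  bounded_op ip B -> bounded_op ip (idfun \- B).
Proof.
case=> M BM; exists (1 + M) => x /=.
have := hnormD_le ipP x (- B x); rewrite hnormN // mulrDl mul1r.
have := BM x; lra.
Qed.

Lemma selfadjoint_compl (B : V -> V) : selfadjoint ip B -> selfadjoint ip (idfun \- B).
Proof. by move=> Bs x y; rewrite /= ipBl ?ipBr // Bs. Qed.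

Lemma Im_ip_selfadjoint (B : V -> V) x : selfadjoint ip B -> complex.Im (ip x (B x)) = 0.
Proof. by move=> Bs; apply: Im_eq0_conj; rewrite -ip_conj // Bs. Qed.

Lemma effectRe (B : V -> V) : selfadjoint ip B ->
  effect ip B <-> forall x, 0 <= complex.Re (ip x (B x)) <= hnorm ip x ^+ 2.
Proof.
move=> Bs; split=> BE x.
  by case: (BE x); rewrite !lecE hnorm_sqr // => /andP[_ ->] /andP[].
rewrite !lecE Im_ip_selfadjoint // Im_ip0 // eqxx -hnorm_sqr //.
by case/andP: (BE x) => -> ->.
Qed.

Lemma effect_compl (B : V -> V) : selfadjoint ip B -> effect ip B -> effect ip (idfun \- B).
Proof.
move=> Bs /(effectRe Bs) BE; apply/(effectRe (selfadjoint_compl Bs)) => x /=.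
rewrite ipBr // ReB hnorm_sqr //.
by case/andP: (BE x); rewrite hnorm_sqr // => ? ?; apply/andP; split; lra.
Qed.

Lemma hnorm_le_effect (B : {linear V -> V}) x : selfadjoint ip B -> effect ip B ->
  hnorm ip (B x) <= hnorm ip x.
Proof.
move=> Bs /(effectRe Bs) BE.
pose f u v := ip u (B v).
have f_lin u a y z : f u (a *: y + z) = a * f u y + f u z by rewrite /f linearP ip_linr.
have f_conj u v : f v u = (f u v)^* by rewrite /f -Bs ip_conj.
have f_pos u : 0 <= complex.Re (f u u) by case/andP: (BE u).
have CS := hermitian_form_CS f_lin f_conj f_pos x (B x).
rewrite /f -Bs -hnorm_sqr // in CS.
case/andP: (BE x) => p_ge0 p_le; case/andP: (BE (B x)) => q_ge0 q_le.
have sqr_le := le_trans CS (ler_pM p_ge0 q_ge0 p_le q_le).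
have : hnorm ip (B x) ^+ 2 <= hnorm ip x ^+ 2 by nra.
by rewrite ler_pXn2r ?nnegrE ?hnorm_ge0.
Qed.

Lemma opnorm_le1_effect (B : {linear V -> V}) : selfadjoint ip B -> effect ip B ->
  opnorm ip B <= 1.
Proof. by move=> Bs BE; apply: opnorm_le => x; apply/le_trans/hnorm_le_effect. Qed.

Lemma Re_ip_le_opnorm_le1 (B : {linear V -> V}) x : bounded_op ip B -> opnorm ip B <= 1 ->
  complex.Re (ip x (B x)) <= hnorm ip x ^+ 2.
Proof.
move=> Bb B_le1; apply: le_trans (Re_ip_le ipP x (B x)) _.
have := hnorm_le_opnorm x Bb; have := hnorm_ge0 ip x; have := hnorm_ge0 ip (B x).
nra.
Qed.

Lemma effect_iff_opnorm_le1 (B : {linear V -> V}) : bounded_op ip B -> selfadjoint ip B ->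
  effect ip B <-> opnorm ip B <= 1 /\ opnorm ip (idfun \- B) <= 1.
Proof.
move=> Bb Bs; split=> [BE | [B_le1 Bc_le1]].
  split; first exact: opnorm_le1_effect.
  by apply: opnorm_le1_effect; [apply: selfadjoint_compl | apply: effect_compl].
apply/(effectRe Bs) => x; rewrite Re_ip_le_opnorm_le1 // andbT.
have := Re_ip_le_opnorm_le1 x (bounded_op_compl Bb) Bc_le1.
by rewrite /= ipBr // ReB hnorm_sqr // lerBlDr lerDl.
Qed.

Lemma opnorm_compl_ge1 (B : {linear V -> V}) : (exists x : V, x != 0) ->
  bounded_op ip B -> 1 <= opnorm ip B + opnorm ip (idfun \- B).
Proof.
move=> /(exists_unit_vector ipP) [u u1] Bb.
have u_le1 : hnorm ip u <= 1 by rewrite u1.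
have := hnormD_le ipP (B u) (u - B u); rewrite addrC subrK u1.
have := opnorm_ub Bb u_le1; have := opnorm_ub (bounded_op_compl Bb) u_le1.
rewrite /=; lra.
Qed.

End Operators.

Theorem mainTheorem1 (R : realType) (V : lmodType R[i]) (ip : V -> V -> R[i])
  (hH : is_separable_hilbert ip) (hV : exists x : V, x != 0) (A : {linear V -> V})
  (hAb : bounded_op ip A) (hAs : selfadjoint ip A) :
  effect ip A <->
  (0 <= opnorm ip A + opnorm ip (fun x => x - A x) - 1 /\
   opnorm ip A + opnorm ip (fun x => x - A x) - 1
     <= 1 - `| opnorm ip A - opnorm ip (fun x => x - A x) |).
Proof.
have ipP : is_inner_product ip by case: hH.
apply: iff_trans (effect_iff_opnorm_le1 ipP hAb hAs) _.
exact/le1_both_iff/(opnorm_compl_ge1 ipP hV hAb).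
Qed.
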